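(* Let $n \ge 3$, let $t,s\ge1$ be odd and coprime, let $r\in\mathbb{Z}$ with $r^s\equiv 1 \bmod t$, and let $a,b\in\mathbb{Z}/t$ with $a^2\equiv b^2 \equiv 1 \bmod t$. Let $G = (C_t\rtimes_{(r)} C_s)\rtimes_{(a,b)} Q_{2^n}$. Then, for $m \ge 1$ odd, $G$ has a quotient isomorphic to $Q_{2^n m}$ if and only if $m \mid t$, $r\equiv 1 \bmod m$, and $Q_{2^n m}\cong C_m\rtimes_{(a,b)} Q_{2^n}$.
   Context: $C_t\rtimes_{(r)}C_s = \langle u, v\mid u^t = v^s = 1, vuv^{-1} = u^r\rangle$. $Q_{2^n} = \langle x,y\mid x^{2^{n-2}}=y^2, yxy^{-1}=x^{-1}\rangle$, and $Q_{2^n}$ acts on $C_t\rtimes_{(r)}C_s$ by $x: u\mapsto u^a, v\mapsto v$ and $y: u\mapsto u^b, v \mapsto v$; $G$ is the resulting semidirect product. Similarly $C_m\rtimes_{(a,b)}Q_{2^n}$ denotes the semidirect product in which $x$ and $y$ act on a generator of $C_m$ by raising to the powers $a$ and $b$ (read mod $m$). $Q_{4k}=\langle x,y\mid x^k=y^2,yxy^{-1}=x^{-1}\rangle$. *)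

From mathcomp Require Import all_boot all_order all_algebra all_fingroup.
Set Implicit Arguments. Unset Strict Implicit. Unset Printing Implicit Defensive.
Local Open Scope group_scope.

(* Generalized quaternion group Q_{4k} = < x, y | x^k = y^2, y x y^-1 = x^-1 >.
   [isQ G k] : the finite group G is isomorphic to Q_{4k}. *)
Definition isQ (gT : finGroupType) (G : {set gT}) (k : nat) : Prop :=
  G \isog Grp (x : y : (x ^+ k = y ^+ 2, y * x * y^-1 = x^-1)).

Definition isG (gT : finGroupType) (G : {set gT}) (n t s : nat) (r : int)
    (a b : nat) : Prop :=
  G \isog Grp (u : v : x : y :
    (u ^+ t = 1, v ^+ s = 1, v * u * v^-1 = u ^+ (absz (r %% t)%Z),
     x ^+ (2 ^ (n - 2)) = y ^+ 2, y * x * y^-1 = x^-1,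
     x * u * x^-1 = u ^+ a, x * v * x^-1 = v,
     y * u * y^-1 = u ^+ b, y * v * y^-1 = v)).

Definition isCQ (gT : finGroupType) (G : {set gT}) (m a b n : nat) : Prop :=
  G \isog Grp (w : x : y :
    (w ^+ m = 1, x ^+ (2 ^ (n - 2)) = y ^+ 2, y * x * y^-1 = x^-1,
     x * w * x^-1 = w ^+ a, y * w * y^-1 = w ^+ b)).

From mathcomp Require Import all_boot all_order all_algebra all_fingroup all_solvable.
From mathcomp Require Import zify.
Set Implicit Arguments. Unset Strict Implicit. Unset Printing Implicit Defensive.
Local Open Scope group_scope.

(* In a group Q = <X, Y> of order 4k satisfying the relations of Q_{4k}, X has
   order 2k and every element outside <X> squares to X^k and inverts <X>.
   Let Q be a quotient of G, generated by the images u, v, x, y of its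
   generators.  Elements of odd order lie in <X>, so u and v do; one of x, y
   lies outside <X>, where it both centralizes and inverts v, hence v = 1.
   Then 4k = |Q| <= #[u] |<x, y>| <= #[u] 2^n forces #[u] = m, and x, y act on
   <u> trivially or by inversion according as they lie in <X> or not; x can
   lie outside <X> only when n = 3, since then x^4 = 1 and |Q| <= 8m.
   Conversely, if g centralizes and h inverts C_m = <w>, then (g w, h)
   satisfies the relations of Q_{2^n m} and generates <w, g, h>; for n = 3
   first replace (x, y) by (y, x) or (x y, x).  So every model of the
   presentation of C_m x| Q_{2^n} is a quotient of Q_{2^n m}, and G maps onto
   it, sending v to 1, once m | t and r = 1 (mod m).  The lower bound
   |Q_{4k}| >= 4k comes from a permutation representation. *)

Section PresentationViews.

Variable gT : finGroupType.
Implicit Type G : {set gT}.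

Lemma homg_QpresP G k :
  reflect (exists X Y, [/\ <[X]> <*> <[Y]> = G, X ^+ k = Y ^+ 2 & Y * X * Y^-1 = X^-1])
    (G \homg Grp (x : y : (x ^+ k = y ^+ 2, y * x * y^-1 = x^-1))).
Proof.
apply: (iffP existsP) => [[[X Y]] | [X [Y [defG rel1 rel2]]]].
  by rewrite /= !xpair_eqE => /and3P[/eqP ? /eqP ? /eqP ?]; exists X, Y.
by exists (X, Y); rewrite /= !xpair_eqE defG rel1 rel2 !eqxx.
Qed.

Lemma homg_CQpresP G m a b n :
  reflect (exists w x y, [/\ <[w]> <*> <[x]> <*> <[y]> = G, w ^+ m = 1,
              x ^+ (2 ^ (n - 2)) = y ^+ 2, y * x * y^-1 = x^-1 &
              x * w * x^-1 = w ^+ a /\ y * w * y^-1 = w ^+ b])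
    (G \homg Grp (w : x : y :
      (w ^+ m = 1, x ^+ (2 ^ (n - 2)) = y ^+ 2, y * x * y^-1 = x^-1,
       x * w * x^-1 = w ^+ a, y * w * y^-1 = w ^+ b))).
Proof.
apply: (iffP existsP) => [[[[w x] y]] | [w [x [y [defG rel1 rel2 rel3 [rel4 rel5]]]]]].
  rewrite /= !xpair_eqE.
  by case/and5P=> /eqP ? /eqP ? /eqP ? /eqP ? /andP[/eqP ? /eqP ?]; exists w, x, y.
by exists (w, x, y); rewrite /= !xpair_eqE defG rel1 rel2 rel3 rel4 rel5 !eqxx.
Qed.

Lemma homg_GpresP G n t s (r : int) a b :
  reflect (exists u v x y, [/\ <[u]> <*> <[v]> <*> <[x]> <*> <[y]> = G,
              [/\ u ^+ t = 1, v ^+ s = 1 & v * u * v^-1 = u ^+ absz (r %% t)%Z],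
              x ^+ (2 ^ (n - 2)) = y ^+ 2, y * x * y^-1 = x^-1 &
              [/\ x * u * x^-1 = u ^+ a, x * v * x^-1 = v,
                  y * u * y^-1 = u ^+ b & y * v * y^-1 = v]])
    (G \homg Grp (u : v : x : y :
      (u ^+ t = 1, v ^+ s = 1, v * u * v^-1 = u ^+ (absz (r %% t)%Z),
       x ^+ (2 ^ (n - 2)) = y ^+ 2, y * x * y^-1 = x^-1,
       x * u * x^-1 = u ^+ a, x * v * x^-1 = v,
       y * u * y^-1 = u ^+ b, y * v * y^-1 = v))).
Proof.
apply: (iffP existsP) => [[[[[u v] x] y]] |
                          [u [v [x [y [defG [r1 r2 r3] r4 r5 [r6 r7 r8 r9]]]]]]].
  rewrite /= !xpair_eqE.
  case/and5P=> /eqP ? /eqP ? /eqP ? /eqP ?.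
  case/and5P=> /eqP ? /eqP ? /eqP ? /eqP ? /andP[/eqP ? /eqP ?].
  by exists u, v, x, y.
by exists (u, v, x, y); rewrite /= !xpair_eqE defG r1 r2 r3 r4 r5 r6 r7 r8 r9 !eqxx.
Qed.

End PresentationViews.

Section GroupElements.

Variable gT : finGroupType.

Lemma conjgVE (x y : gT) : y * x * y^-1 = x ^ y^-1.
Proof. by rewrite conjgE invgK mulgA. Qed.

Lemma expg_coprime_eq1 (g : gT) p q :
  g ^+ p = 1 -> g ^+ q = 1 -> coprime p q -> g = 1.
Proof.
move=> gp gq /eqP cop_pq; apply/eqP; rewrite -order_eq1 -dvdn1 -cop_pq.
by rewrite dvdn_gcd !order_dvdn gp gq !eqxx.
Qed.

Lemma mem_norm_cycle (x u : gT) e :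
  x * u * x^-1 = u ^+ e -> x \in 'N(<[u]>).
Proof. by move=> xu; rewrite -groupV inE -cycleJ -conjgVE xu cycleX. Qed.

Lemma conjg_cycle_id (X g h : gT) :
  g \in <[X]> -> h \in <[X]> -> g * h * g^-1 = h.
Proof.
by case/cycleP=> i -> /cycleP[j ->]; rewrite (commuteX2 i j (commute_refl X)) mulgK.
Qed.

Lemma expg_eq_id_mod (g : gT) e : g ^+ e = g -> e = 1 %[mod #[g]].
Proof. by move=> ge; apply/eqP; rewrite -eq_expg_mod_order ge expg1. Qed.

Lemma expg_eq_inv_dvd (g : gT) e : g ^+ e = g^-1 -> #[g] %| e.+1.
Proof. by move=> ge; rewrite order_dvdn expgSr ge mulVg. Qed.

Lemma expg_id_of_mod (g : gT) m e :
  g ^+ m = 1 -> e = 1 %[mod m] -> g ^+ e = g.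
Proof. by move=> gm e1; rewrite -(expg_mod e gm) e1 expg_mod ?expg1. Qed.

Lemma expg_inv_of_dvd (g : gT) m e :
  g ^+ m = 1 -> m %| e.+1 -> g ^+ e = g^-1.
Proof.
move=> gm /dvdnP[c def_e]; apply: (mulIg g); rewrite mulVg -expgSr def_e.
by rewrite mulnC expgM gm expg1n.
Qed.

Lemma mem_join3_cycle (w x y : gT) :
  let J := <[w]> <*> <[x]> <*> <[y]> in [/\ w \in J, x \in J & y \in J].
Proof.
move=> J; have := subxx J; rewrite {1}/J !join_subG !cycle_subG.
by case/andP=> /andP[-> ->] ->.
Qed.

Lemma join3_cycle_eq (w x y x' y' : gT) :
  x' \in <[w]> <*> <[x]> <*> <[y]> -> y' \in <[w]> <*> <[x]> <*> <[y]> ->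
  x \in <[w]> <*> <[x']> <*> <[y']> -> y \in <[w]> <*> <[x']> <*> <[y']> ->
  <[w]> <*> <[x']> <*> <[y']> = <[w]> <*> <[x]> <*> <[y]>.
Proof.
have [wJ _ _] := mem_join3_cycle w x y; have [wJ' _ _] := mem_join3_cycle w x' y'.
move=> x'J y'J xJ' yJ'; apply/eqP.
by rewrite eqEsubset !join_subG !cycle_subG wJ wJ' x'J y'J xJ' yJ'.
Qed.

Lemma quaternion8_rels (x y : gT) :
  x ^+ 2 = y ^+ 2 -> y * x * y^-1 = x^-1 ->
  [/\ x * y * x^-1 = y^-1, (x * y) ^+ 2 = x ^+ 2 & x * (x * y) * x^-1 = (x * y)^-1].
Proof.
move=> x2y2 yx.
have yy : y * y = x * x by move: x2y2; rewrite !expgS !expg0 !mulg1.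
have yxy : y * x * y = x by rewrite -[y * x](mulgKV y) yx -mulgA yy mulKg.
have xy_yx : x * y * x^-1 = y^-1.
  have -> : x * y = y^-1 * x by rewrite -{2}yxy !mulgA mulVg mul1g.
  by rewrite mulgK.
split=> //.
  by rewrite expgS expg1 -mulgA (mulgA y) yxy expgS expg1.
by rewrite -mulgA xy_yx invMg -yx !mulgA mulVg mul1g.
Qed.

End GroupElements.

Lemma modz_eq1_absz (r : int) (t m : nat) : 0 < t -> m %| t ->
  (r = 1 %[mod m])%Z <-> absz (r %% t)%Z = 1 %[mod m].
Proof.
move=> t_gt0 /dvdnP[c def_t].
have r_t_ge0 : (0 <= (r %% t)%Z)%R by rewrite modz_ge0 // eqz_nat -lt0n.
have -> : (r %% m)%Z = (absz (r %% t)%Z %% m)%Z.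
  by rewrite gez0_abs // [in LHS](divz_eq r t) def_t PoszM GRing.mulrA modzMDl.
by rewrite !modz_nat; split=> [[]|->].
Qed.

Lemma homg_quotient_isog (gT rT : finGroupType) (G : {group gT}) (K : {group rT}) :
  K \homg G -> exists N : {group gT}, N <| G /\ G / N \isog K.
Proof.
case/homgP=> f imf; exists ('ker f)%G; split; first exact: ker_normal.
by have := first_isog f; rewrite imf.
Qed.

Section DicyclicRelations.

Variables (gT : finGroupType) (X Y : gT) (k : nat).
Hypotheses (XkY2 : X ^+ k = Y ^+ 2) (YXY : Y * X * Y^-1 = X^-1).

Lemma dicyclic_norm : <[Y]> \subset 'N(<[X]>).
Proof. by rewrite cycle_subG -groupV; apply/normP; rewrite -cycleJ -conjgVE YXY cycleV. Qed.

Lemma mulg_expYX j : Y * X ^+ j = X ^- j * Y.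
Proof. by rewrite -expVgn -YXY conjgVE -conjXg -conjgVE mulgKV. Qed.

Lemma order_dvd_double : #[X] %| k.*2.
Proof.
rewrite order_dvdn -addnn expgD; apply/eqP.
have: (X ^+ k) ^ Y^-1 = X ^+ k by rewrite XkY2 conjXg conjgE invgK mulgV mulg1.
by rewrite conjXg -conjgVE YXY expVgn => /(congr1 (mulg^~ (X ^+ k))); rewrite mulVg.
Qed.

Lemma card_dicyclic : #|<[X]> <*> <[Y]>| = (#[X] * #[coset <[X]> Y])%N.
Proof.
have nXD : <[X]> <*> <[Y]> \subset 'N(<[X]>) by rewrite join_subG normG dicyclic_norm.
rewrite -(Lagrange (joing_subl _ _)) -card_quotient // quotientYidl ?dicyclic_norm //.
by rewrite quotient_cycle ?(subsetP dicyclic_norm) ?cycle_id.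
Qed.

Lemma order_coset_dvd2 : #[coset <[X]> Y] %| 2.
Proof.
rewrite order_dvdn -morphX ?(subsetP dicyclic_norm) ?cycle_id //.
by apply/eqP/coset_id; rewrite -XkY2 mem_cycle.
Qed.

Lemma dicyclic_outside g : g \in <[X]> <*> <[Y]> -> g \notin <[X]> ->
  g ^+ 2 = X ^+ k /\ {in <[X]>, forall h, g * h * g^-1 = h^-1}.
Proof.
rewrite norm_joinEr ?dicyclic_norm // => /mulsgP[_ _ /cycleP[i ->] /cycleP[j ->] ->].
rewrite (divn_eq j 2) expgD mulnC expgM -XkY2 -expgM mulgA -expgD modn2.
case: (odd j); last by rewrite mulg1 mem_cycle.
rewrite expg1; set i' := (i + _)%N => _; split.
  by rewrite expgS expg1 -mulgA (mulgA Y) mulg_expYX !mulgA mulgV mul1g XkY2 expgS expg1.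
move=> _ /cycleP[l ->].
rewrite invMg !mulgA -(mulgA (X ^+ i') Y) mulg_expYX !mulgA mulgK.
by rewrite -expVgn (commuteX2 i' l (commuteV (commute_refl X))) mulgK.
Qed.

Section DicyclicOrder.

Hypothesis cardD : #|<[X]> <*> <[Y]>| = k.*2.*2.

Lemma order_dicyclic : #[X] = k.*2.
Proof.
have cardXY := card_dicyclic; rewrite cardD in cardXY.
have oX_gt0 := order_gt0 X; have c_gt0 := order_gt0 (coset <[X]> Y).
have c_le2 := dvdn_leq (isT : 0 < 2) order_coset_dvd2.
have k_gt0 : 0 < k by nia.
have := dvdn_leq _ order_dvd_double; rewrite double_gt0 => /(_ k_gt0); nia.
Qed.

Lemma dicyclic_odd_order g e :
  g \in <[X]> <*> <[Y]> -> g ^+ e = 1 -> odd e -> g \in <[X]>.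
Proof.
move=> Dg ge1 odd_e; apply/negPn/negP => gX.
have [g2 _] := dicyclic_outside Dg gX.
have g4 : g ^+ 4 = 1 by rewrite (expgM g 2 2) g2 -expgM muln2 -order_dicyclic expg_order.
case/negP: gX; rewrite (expg_coprime_eq1 g4 ge1) ?group1 //.
by rewrite (coprime_pexpl 2 (k := 2)) // coprime2n.
Qed.

Lemma dicyclic_not_cycle : ~~ (<[X]> <*> <[Y]> \subset <[X]>).
Proof.
apply/negP => /subset_leq_card; rewrite cardD -orderE order_dicyclic.
by have := order_gt0 X; rewrite order_dicyclic; lia.
Qed.

End DicyclicOrder.

End DicyclicRelations.

Section DicyclicModel.

Import GRing.Theory.

Variable k : nat.
Hypothesis k_gt0 : 0 < k.

Local Notation point := ('Z_(k.*2) * bool)%type.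

Let k2_gt1 : 1 < k.*2. Proof. by rewrite -addnn; lia. Qed.

(* The point (i, e) stands for X^i Y^e in Q_{4k}; both generators act by left
   multiplication. *)
Definition dicyclic_shift (p : point) : point := ((p.1 + 1)%R, p.2).
Definition dicyclic_flip (p : point) : point :=
  if p.2 then ((k%:R - p.1)%R, false) else ((- p.1)%R, true).

Lemma dicyclic_shift_inj : injective dicyclic_shift.
Proof.
by apply: (can_inj (g := fun p : point => ((p.1 - 1)%R, p.2))) => -[i e] /=; rewrite addrK.
Qed.

Lemma dicyclic_flip_inj : injective dicyclic_flip.
Proof.
pose unflip (p : point) : point :=
  if p.2 then ((- p.1)%R, false) else ((k%:R - p.1)%R, true).
by apply: (can_inj (g := unflip)) => -[i []]; rewrite /unflip /= ?opprK ?subKr.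
Qed.

Definition dicyclic_X : {perm point} := perm dicyclic_shift_inj.
Definition dicyclic_Y : {perm point} := perm dicyclic_flip_inj.

Lemma dicyclic_X_exp j p : (dicyclic_X ^+ j) p = ((p.1 + j%:R)%R, p.2).
Proof.
rewrite permX; elim: j => [|j IHj] /=; first by rewrite addr0; case: p.
by rewrite IHj permE /dicyclic_shift /= -addrA -natr1.
Qed.

Lemma dicyclic_model_rel1 : dicyclic_X ^+ k = dicyclic_Y ^+ 2.
Proof.
have Nk : (- k%:R = k%:R :> 'Z_(k.*2))%R.
  by apply/esym/eqP; rewrite -addr_eq0 -natrD addnn pchar_Zp.
apply/permP => -[i e]; rewrite dicyclic_X_exp expgS expg1 permM !permE.
case: e; rewrite /dicyclic_flip /=; last by rewrite opprK addrC.
by rewrite opprB Nk.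
Qed.

Lemma dicyclic_model_rel2 : dicyclic_Y * dicyclic_X * dicyclic_Y^-1 = dicyclic_X^-1.
Proof.
apply: (mulIg dicyclic_Y); rewrite -mulgA mulVg mulg1.
apply: (mulgI dicyclic_X); rewrite mulKVg.
apply/permP => -[i e]; rewrite !permM !permE /dicyclic_flip /dicyclic_shift /=.
by case: e; rewrite /= opprD ?addrA subrK.
Qed.

Lemma card_dicyclic_model :
  k.*2.*2 <= #|<[dicyclic_X]> <*> <[dicyclic_Y]>|.
Proof.
have -> : k.*2.*2 = #|[set: point]|.
  by rewrite cardsT card_prod card_bool card_ord Zp_cast // muln2.
apply: leq_trans (leq_imset_card (fun g : {perm point} => g (0%R, false)) _).
apply/subset_leq_card/subsetP => -[i e] _.
have Xin : dicyclic_X \in <[dicyclic_X]> <*> <[dicyclic_Y]>.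
  by rewrite -cycle_subG joing_subl.
have Yin : dicyclic_Y \in <[dicyclic_X]> <*> <[dicyclic_Y]>.
  by rewrite -cycle_subG joing_subr.
apply/imsetP; case: e.
  exists (dicyclic_Y * dicyclic_X ^+ i); first by rewrite groupM ?groupX.
  by rewrite permM dicyclic_X_exp permE /dicyclic_flip /= oppr0 add0r natr_Zp.
exists (dicyclic_X ^+ i); first by rewrite groupX.
by rewrite dicyclic_X_exp /= add0r natr_Zp.
Qed.

End DicyclicModel.

Lemma card_isQ (gT : finGroupType) (G : {group gT}) k :
  0 < k -> isQ G k -> #|G| = k.*2.*2.
Proof.
move=> k_gt0 isoG; apply/eqP; rewrite eqn_leq; apply/andP; split.
  have /homg_QpresP[X [Y [<- XkY2 YXY]]] := isoGrp_hom isoG.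
  rewrite card_dicyclic // -muln2 leq_mul //.
    by apply: dvdn_leq (order_dvd_double XkY2 YXY); rewrite double_gt0.
  exact: dvdn_leq (order_coset_dvd2 XkY2 YXY).
apply: leq_trans (card_dicyclic_model k_gt0) (leq_homg _).
rewrite (isoG _ (<[dicyclic_X k]> <*> <[dicyclic_Y k]>)%G); apply/homg_QpresP.
exists (dicyclic_X k), (dicyclic_Y k).
by rewrite dicyclic_model_rel1 ?dicyclic_model_rel2.
Qed.

(* The action of Q_{2^n} on C_m given by (a, b) is trivial on a cyclic
   subgroup of index 2 and inverts C_m outside it: that subgroup is <x>, or,
   when n = 3, possibly <y> or <xy>. *)
Definition dicyclic_action n m a b :=
  (a = 1 %[mod m] /\ m %| b.+1) \/
  [/\ n = 3, m %| a.+1 & b = 1 %[mod m] \/ m %| b.+1].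

Section GeneratorsInDicyclic.

Variables (gT : finGroupType) (X Y u v x y : gT) (n t s m a b : nat).
Local Notation k := (2 ^ (n - 2) * m)%N.
Local Notation Q := (<[X]> <*> <[Y]>).
Hypotheses (n_gt2 : 2 < n) (odd_t : odd t) (odd_s : odd s) (odd_m : odd m).
Hypotheses (XkY2 : X ^+ k = Y ^+ 2) (YXY : Y * X * Y^-1 = X^-1).
Hypothesis cardQ : #|Q| = k.*2.*2.
Hypothesis genQ : <[u]> <*> <[v]> <*> <[x]> <*> <[y]> = Q.
Hypotheses (ut : u ^+ t = 1) (vs : v ^+ s = 1).
Hypotheses (xy : x ^+ (2 ^ (n - 2)) = y ^+ 2) (yx : y * x * y^-1 = x^-1).
Hypotheses (xu : x * u * x^-1 = u ^+ a) (xv : x * v * x^-1 = v).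
Hypotheses (yu : y * u * y^-1 = u ^+ b) (yv : y * v * y^-1 = v).

Let gens_in_Q : [/\ u \in Q, v \in Q, x \in Q & y \in Q].
Proof.
have := subxx Q; rewrite -{1}genQ !join_subG !cycle_subG.
by case/andP=> /andP[/andP[-> ->] ->] ->.
Qed.

Let u_in_X : u \in <[X]>.
Proof.
by have [uQ _ _ _] := gens_in_Q; exact: (dicyclic_odd_order XkY2 YXY cardQ uQ ut odd_t).
Qed.

Let v_in_X : v \in <[X]>.
Proof.
by have [_ vQ _ _] := gens_in_Q; exact: (dicyclic_odd_order XkY2 YXY cardQ vQ vs odd_s).
Qed.

Let x_or_y_outside : (x \notin <[X]>) || (y \notin <[X]>).
Proof.
apply: contraR (dicyclic_not_cycle XkY2 YXY cardQ); rewrite negb_or !negbK => /andP[xX yX].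
by rewrite -genQ !join_subG !cycle_subG u_in_X v_in_X xX.
Qed.

Let v_eq1 : v = 1.
Proof.
have [g [gQ gX gv]] : exists g, [/\ g \in Q, g \notin <[X]> & g * v * g^-1 = v].
  by have [_ _ xQ yQ] := gens_in_Q; case/orP: x_or_y_outside => ?; [exists x | exists y].
have [_ g_inv] := dicyclic_outside XkY2 YXY gQ gX.
have v2 : v ^+ 2 = 1 by rewrite expgS expg1 -{1}gv g_inv ?mulVg.
by apply: expg_coprime_eq1 v2 vs _; rewrite coprime2n.
Qed.

Let card_Q_le : #|Q| <= #[u] * #[x].*2.
Proof.
have nux : <[x]> <*> <[y]> \subset 'N(<[u]>).
  by rewrite join_subG !cycle_subG (mem_norm_cycle xu) (mem_norm_cycle yu).
have -> : Q = <[u]> * (<[x]> <*> <[y]>) :> {set gT}.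
  by rewrite -genQ v_eq1 cycle1 joingG1 -joingA norm_joinEr.
apply: leq_trans (_ : _ <= #|<[u]>| * #|<[x]> <*> <[y]>|) _.
  by rewrite mul_cardG leq_pmulr ?cardG_gt0.
rewrite -orderE leq_mul2l card_dicyclic // -muln2 leq_mul2l.
by rewrite (dvdn_leq _ (order_coset_dvd2 xy yx)) ?orbT.
Qed.

Let order_u : #[u] = m.
Proof.
have P_gt0 : 0 < 2 ^ (n - 2) by rewrite expn_gt0.
have m_gt0 : 0 < m by rewrite odd_gt0.
have u_dvd_m : #[u] %| m.
  have odd_u : odd #[u] by apply: dvdn_odd odd_t; rewrite order_dvdn ut.
  have cop_u2 : coprime #[u] (2 ^ (n - 2) * 2) by rewrite -expnSr coprimeXr ?coprimen2.
  rewrite -(Gauss_dvdl m cop_u2) mulnA (mulnC m) muln2.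
  by rewrite -(order_dicyclic XkY2 YXY cardQ) orderE cardSg ?cycle_subG.
have := card_Q_le; rewrite cardQ.
have := dvdn_leq _ (order_dvd_double xy yx); rewrite double_gt0 => /(_ P_gt0) ox_le.
move=> cardQ_le; apply/eqP; rewrite eqn_leq dvdn_leq //=; nia.
Qed.

Let x_outside_n3 : x \notin <[X]> -> n = 3.
Proof.
move=> xX; have [_ _ xQ _] := gens_in_Q.
have [x2 _] := dicyclic_outside XkY2 YXY xQ xX.
have x4 : x ^+ 4 = 1.
  by rewrite (expgM x 2 2) x2 -expgM muln2 -(order_dicyclic XkY2 YXY cardQ) expg_order.
have ox_le4 : #[x] <= 4 by apply: dvdn_leq; rewrite // order_dvdn x4.
have := card_Q_le; rewrite cardQ order_u => cardQ_le.
have : 2 ^ (n - 2) <= 2 ^ 1 by have := odd_gt0 odd_m; nia.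
by rewrite leq_exp2l //; lia.
Qed.

Lemma Gpres_generators_in_dicyclic : [/\ v = 1, #[u] = m & dicyclic_action n m a b].
Proof.
split => //.
have conj_u g e : g \in Q -> g * u * g^-1 = u ^+ e ->
    (g \in <[X]> -> e = 1 %[mod m]) /\ (g \notin <[X]> -> m %| e.+1).
  move=> gQ gu; rewrite -order_u; split=> gX.
    by apply: expg_eq_id_mod; rewrite -gu (conjg_cycle_id gX u_in_X).
  have [_ g_inv] := dicyclic_outside XkY2 YXY gQ gX.
  by apply: expg_eq_inv_dvd; rewrite -gu g_inv.
have [_ _ xQ yQ] := gens_in_Q.
have [xa1 xa2] := conj_u x a xQ xu; have [yb1 yb2] := conj_u y b yQ yu.
case xX: (x \in <[X]>).
  have yX : y \notin <[X]> by move: x_or_y_outside; rewrite xX.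
  by left; split; [apply: xa1 | apply: yb2].
right; split; [exact: x_outside_n3 (negbT xX) | exact: xa2 (negbT xX) |].
by case yX: (y \in <[X]>); [left; apply: yb1 | right; apply: yb2; rewrite yX].
Qed.

End GeneratorsInDicyclic.

Section DicyclicFromCentralizingPair.

Variables (gT : finGroupType) (w g h : gT) (n m : nat).
Local Notation P := (2 ^ (n - 2))%N.
Hypotheses (odd_m : odd m) (wm : w ^+ m = 1).
Hypotheses (gh : g ^+ P = h ^+ 2) (hg : h * g * h^-1 = g^-1).
Hypotheses (gw : g * w * g^-1 = w) (hw : h * w * h^-1 = w^-1).

Let cgw : commute g w. Proof. by rewrite /commute -{2}gw mulgKV. Qed.

Let g2P : g ^+ P.*2 = 1.
Proof. by apply/eqP; rewrite -order_dvdn (order_dvd_double gh hg). Qed.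

Lemma dicyclic_mul_rel1 : (g * w) ^+ (P * m) = h ^+ 2.
Proof.
have h4 : (h ^+ 2) ^+ 2 = 1 by rewrite -gh -expgM muln2.
rewrite expgMn // [in w ^+ _]mulnC !expgM wm expg1n mulg1 gh.
by rewrite -(expg_mod m h4) modn2 odd_m expg1.
Qed.

Lemma dicyclic_mul_rel2 : h * (g * w) * h^-1 = (g * w)^-1.
Proof. by rewrite !conjgVE conjMg -!conjgVE hg hw -invMg cgw. Qed.

Lemma dicyclic_mul_gen : <[g * w]> <*> <[h]> = <[w]> <*> <[g]> <*> <[h]>.
Proof.
have [wJ gJ hJ] := mem_join3_cycle w g h.
apply/eqP; rewrite eqEsubset !join_subG !cycle_subG groupM ?hJ //=.
have gwD : g * w \in <[g * w]> <*> <[h]> by rewrite -cycle_subG joing_subl.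
have wD : w \in <[g * w]> <*> <[h]>.
  have gen_w : w \in <[w ^+ P.*2]>.
    rewrite -(eqP (_ : generator <[w]> (w ^+ P.*2))) ?cycle_id //.
    rewrite generator_coprime -muln2 -expnSr coprimeXr // coprimen2.
    by apply: dvdn_odd odd_m; rewrite order_dvdn wm.
  have gw2P : (g * w) ^+ P.*2 = w ^+ P.*2 by rewrite expgMn // g2P mul1g.
  by rewrite -gw2P in gen_w; apply: subsetP gen_w; rewrite cycle_subG groupX.
rewrite wD -[h \in _]cycle_subG joing_subr andbT /=.
suff: g * w * w^-1 \in <[g * w]> <*> <[h]> by rewrite mulgK.
by rewrite groupM ?groupV.
Qed.

End DicyclicFromCentralizingPair.

Lemma dicyclic_gens_of_CQ (gT : finGroupType) (R : {set gT}) (w x y : gT) n m a b :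
  odd m -> dicyclic_action n m a b ->
  <[w]> <*> <[x]> <*> <[y]> = R -> w ^+ m = 1 ->
  x ^+ (2 ^ (n - 2)) = y ^+ 2 -> y * x * y^-1 = x^-1 ->
  x * w * x^-1 = w ^+ a -> y * w * y^-1 = w ^+ b ->
  exists X Y, [/\ <[X]> <*> <[Y]> = R, X ^+ (2 ^ (n - 2) * m) = Y ^+ 2
                 & Y * X * Y^-1 = X^-1].
Proof.
move=> odd_m act <- wm xy yx xw yw.
suff [g [h [<- gh hg gw hw]]] : exists g h,
    [/\ <[w]> <*> <[g]> <*> <[h]> = <[w]> <*> <[x]> <*> <[y]>,
        g ^+ (2 ^ (n - 2)) = h ^+ 2, h * g * h^-1 = g^-1,
        g * w * g^-1 = w & h * w * h^-1 = w^-1].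
  exists (g * w), h; split; first exact: (dicyclic_mul_gen odd_m wm gh hg gw).
    exact: (dicyclic_mul_rel1 odd_m wm gh hg gw).
  exact: (dicyclic_mul_rel2 hg gw hw).
have [_ xJ yJ] := mem_join3_cycle w x y.
case: act => [[a1 b1] | [n3 a1 b1]].
  by exists x, y; rewrite xw yw (expg_id_of_mod wm a1) (expg_inv_of_dvd wm b1).
rewrite n3 in xy; have [xyx xy2 xxy] := quaternion8_rels xy yx.
have xw_inv : x * w * x^-1 = w^-1 by rewrite xw (expg_inv_of_dvd wm a1).
case: b1 => b1.
  have [_ yJ' xJ'] := mem_join3_cycle w y x.
  exists y, x; rewrite (join3_cycle_eq yJ xJ xJ' yJ') n3 -xy yw.
  by rewrite (expg_id_of_mod wm b1).
have [_ xyJ' xJ'] := mem_join3_cycle w (x * y) x.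
exists (x * y), x; split=> //.
- have := groupM (groupVr xJ') xyJ'; rewrite mulKg.
  exact: join3_cycle_eq (groupM xJ yJ) xJ xJ'.
- by rewrite n3 xy2.
have -> : x * y * w * (x * y)^-1 = x * (y * w * y^-1) * x^-1 by rewrite invMg !mulgA.
rewrite yw (expg_inv_of_dvd wm b1).
by apply: invg_inj; rewrite !invMg !invgK mulgA xw_inv.
Qed.

Lemma homg_Gpres_of_CQ (gT : finGroupType) (R : {set gT}) n t s (r : int) m a b :
  0 < t -> m %| t -> (r = 1 %[mod m])%Z ->
  R \homg Grp (w : x : y :
    (w ^+ m = 1, x ^+ (2 ^ (n - 2)) = y ^+ 2, y * x * y^-1 = x^-1,
     x * w * x^-1 = w ^+ a, y * w * y^-1 = w ^+ b)) ->
  R \homg Grp (u : v : x : y :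
    (u ^+ t = 1, v ^+ s = 1, v * u * v^-1 = u ^+ (absz (r %% t)%Z),
     x ^+ (2 ^ (n - 2)) = y ^+ 2, y * x * y^-1 = x^-1,
     x * u * x^-1 = u ^+ a, x * v * x^-1 = v,
     y * u * y^-1 = u ^+ b, y * v * y^-1 = v)).
Proof.
move=> t_gt0 m_dvd_t r1 /homg_CQpresP[w [x [y [defR wm xy yx [xw yw]]]]].
apply/homg_GpresP; exists w, 1, x, y; split=> //.
- by rewrite cycle1 joingG1.
- split; last by rewrite mul1g invg1 mulg1 (expg_id_of_mod wm) -?modz_eq1_absz.
    by case/dvdnP: m_dvd_t => c ->; rewrite mulnC expgM wm expg1n.
  exact: expg1n.
by split; rewrite ?mulg1 ?mulgV.
Qed.

Lemma isCQ_of_dicyclic (gT : finGroupType) (K : {group gT}) n m a b :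
  odd m -> dicyclic_action n m a b -> isQ K (2 ^ (n - 2) * m) ->
  K \homg Grp (w : x : y :
    (w ^+ m = 1, x ^+ (2 ^ (n - 2)) = y ^+ 2, y * x * y^-1 = x^-1,
     x * w * x^-1 = w ^+ a, y * w * y^-1 = w ^+ b)) ->
  isCQ K m a b n.
Proof.
move=> odd_m act isoK homK; apply: intro_isoGrp => // rT R.
case/homg_CQpresP=> w [x [y [defR wm xy yx [xw yw]]]].
by rewrite (isoK _ R); apply/homg_QpresP; apply: dicyclic_gens_of_CQ defR wm xy yx xw yw.
Qed.

Lemma dicyclic_quotient_conditions (gT : finGroupType) (Q : {group gT})
    n t s (r : int) m a b :
  2 < n -> 0 < t -> odd t -> odd s -> odd m -> isQ Q (2 ^ (n - 2) * m) ->
  Q \homg Grp (u : v : x : y :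
    (u ^+ t = 1, v ^+ s = 1, v * u * v^-1 = u ^+ (absz (r %% t)%Z),
     x ^+ (2 ^ (n - 2)) = y ^+ 2, y * x * y^-1 = x^-1,
     x * u * x^-1 = u ^+ a, x * v * x^-1 = v,
     y * u * y^-1 = u ^+ b, y * v * y^-1 = v)) ->
  [/\ m %| t, (r = 1 %[mod m])%Z & isCQ Q m a b n].
Proof.
move=> n_gt2 t_gt0 odd_t odd_s odd_m isoQ.
case/homg_GpresP=> u [v [x [y [genQ [ut vs vu] xy yx [xu xv yu yv]]]]].
have /homg_QpresP[X [Y [defQ XkY2 YXY]]] := isoGrp_hom isoQ.
have cardQ : #|<[X]> <*> <[Y]>| = (2 ^ (n - 2) * m).*2.*2.
  by rewrite defQ (card_isQ _ isoQ) // muln_gt0 expn_gt0 (odd_gt0 odd_m).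
rewrite -defQ in genQ.
have [v1 ou act] := Gpres_generators_in_dicyclic n_gt2 odd_t odd_s odd_m
  XkY2 YXY cardQ genQ ut vs xy yx xu xv yu yv.
subst v; have m_dvd_t : m %| t by rewrite -ou order_dvdn ut.
split=> //.
  rewrite (modz_eq1_absz r t_gt0 m_dvd_t) -ou; apply: expg_eq_id_mod.
  by rewrite -vu mul1g invg1 mulg1.
apply: isCQ_of_dicyclic odd_m act isoQ _; apply/homg_CQpresP.
exists u, x, y; rewrite -ou expg_order; split=> //.
by rewrite -defQ -genQ cycle1 joingG1.
Qed.

Theorem lemma1p7 (gT : finGroupType) (G : {group gT}) (n t s : nat) (r : int)
    (a b m : nat) :
  3 <= n -> 0 < t -> 0 < s -> odd t -> odd s -> coprime t s ->
  ((r ^+ s)%R = 1 %[mod t])%Z ->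
  a ^ 2 = 1 %[mod t] -> b ^ 2 = 1 %[mod t] ->
  isG G n t s r a b ->
  0 < m -> odd m ->
  (exists H : {group gT}, H <| G /\ isQ (G / H)%g (2 ^ (n - 2) * m)) <->
  [/\ m %| t, (r = 1 %[mod m])%Z &
      exists (hT : finGroupType) (K : {group hT}),
        isQ K (2 ^ (n - 2) * m) /\ isCQ K m a b n].
Proof.
move=> n_ge3 t_gt0 _ odd_t odd_s _ _ _ _ isoG _ odd_m.
split=> [[H [nsHG isoQ]] | [m_dvd_t r1 [hT [K [isoK isoCQ]]]]].
  have homQG := homGrp_trans (quotient_homg (normal_norm nsHG)) (isoGrp_hom isoG).
  have [m_dvd_t r1 isoCQ] :=
    dicyclic_quotient_conditions n_ge3 t_gt0 odd_t odd_s odd_m isoQ homQG.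
  by split=> //; exists _, (G / H)%G.
have homKG : K \homg G.
  by rewrite (isoG _ K); apply: homg_Gpres_of_CQ (isoGrp_hom isoCQ).
have [N [nsNG isoN]] := homg_quotient_isog homKG.
by exists N; split=> //; apply: isoGrp_trans isoN isoK.
Qed.
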